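(* Let $X$ be a complex Banach space and $\Gamma\subset\mathcal{B}(X)$ such that $TS\in\Gamma$ for all $T,S\in\Gamma$. Let $\lambda:\Gamma\to\mathbb{T}$, $T\mapsto\lambda_T$, satisfy $\lambda_{TS}=\lambda_T\lambda_S$ for all $T,S\in\Gamma$, where $\mathbb{T}=\{\alpha\in\mathbb{C}:|\alpha|=1\}$. Let $\Gamma_1=\{\lambda_TT: T\in\Gamma\}$. Then $\operatorname{Rec}(\Gamma)=\operatorname{Rec}(\Gamma_1)$.
   Context: $\mathcal{B}(X)$ denotes the algebra of bounded linear operators on $X$. For $\Gamma\subset\mathcal{B}(X)$, a vector $x\in X\setminus\{0\}$ is called recurrent for $\Gamma$ if there exists a sequence $(T_k)_{k\geq 1}$ of elements of $\Gamma$ such that $T_kx\to x$ as $k\to\infty$. $\operatorname{Rec}(\Gamma)$ denotes the set of all recurrent vectors for $\Gamma$. *)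

From Stdlib Require Import Reals.
Open Scope R_scope.

Definition Cplx : Type := (R * R)%type.
Definition C0 : Cplx := (0, 0).
Definition C1 : Cplx := (1, 0).
Definition Cadd (a b : Cplx) : Cplx := (fst a + fst b, snd a + snd b).
Definition Cmul (a b : Cplx) : Cplx :=
  (fst a * fst b - snd a * snd b, fst a * snd b + snd a * fst b).
Definition Cmod (a : Cplx) : R := sqrt (fst a * fst a + snd a * snd a).

Record CBanach : Type := {
  vec :> Type;
  vzero : vec;
  vadd : vec -> vec -> vec;
  vopp : vec -> vec;
  vscal : Cplx -> vec -> vec;
  vnorm : vec -> R;
  vadd_assoc : forall x y z, vadd x (vadd y z) = vadd (vadd x y) z;
  vadd_comm : forall x y, vadd x y = vadd y x;
  vadd_zero : forall x, vadd x vzero = x;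
  vadd_opp : forall x, vadd x (vopp x) = vzero;
  vscal_one : forall x, vscal C1 x = x;
  vscal_mul : forall a b x, vscal a (vscal b x) = vscal (Cmul a b) x;
  vscal_addv : forall a x y, vscal a (vadd x y) = vadd (vscal a x) (vscal a y);
  vscal_adds : forall a b x, vscal (Cadd a b) x = vadd (vscal a x) (vscal b x);
  vnorm_eq0 : forall x, vnorm x = 0 -> x = vzero;
  vnorm_scal : forall a x, vnorm (vscal a x) = Cmod a * vnorm x;
  vnorm_triangle : forall x y, vnorm (vadd x y) <= vnorm x + vnorm y;
  vcomplete : forall u : nat -> vec,
    (forall eps, 0 < eps -> exists N, forall m n, (N <= m)%nat -> (N <= n)%nat ->
        vnorm (vadd (u m) (vopp (u n))) < eps) ->
    exists l, forall eps, 0 < eps -> exists N, forall n, (N <= n)%nat ->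
        vnorm (vadd (u n) (vopp l)) < eps
}.

Arguments vzero {_}.
Arguments vadd {_} _ _.
Arguments vopp {_} _.
Arguments vscal {_} _ _.
Arguments vnorm {_} _.

Definition converges_to {X : CBanach} (u : nat -> X) (l : X) : Prop :=
  forall eps, 0 < eps -> exists N, forall n, (N <= n)%nat ->
    vnorm (vadd (u n) (vopp l)) < eps.

Definition bounded_linear {X : CBanach} (T : X -> X) : Prop :=
  (forall x y, T (vadd x y) = vadd (T x) (T y)) /\
  (forall a x, T (vscal a x) = vscal a (T x)) /\
  (exists M, forall x, vnorm (T x) <= M * vnorm x).

Definition Rec {X : CBanach} (Gamma : (X -> X) -> Prop) (x : X) : Prop :=
  x <> vzero /\
  exists Tk : nat -> (X -> X), (forall k, Gamma (Tk k)) /\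
    converges_to (fun k => Tk k x) x.

From Stdlib Require Import Reals Lra Lia ClassicalEpsilon.
From Coquelicot Require Import Complex.
From Pilot Require Import Defs.
From mathcomp Require ssreflect ssrfun ssrbool eqtype ssrnat order ssralg ssrnum
  boolp classical_sets reals topology normedtype sequences Rstruct Rstruct_topology.
Open Scope R_scope.

(* Fix x.  Call a pair (a, m) of scalars approximable when for every eps > 0
   some T in Gamma satisfies |T x - a x| < eps and |lam_T - m| < eps.
   - Approximable pairs are closed under products: compose the operators,
     using boundedness of the first one and multiplicativity of lam.
   - By simultaneous Dirichlet approximation on the torus, a pair (a, m) of
     unimodular numbers has positive powers (a^k, m^k) arbitrarily close to
     (1, 1); so once some unimodular pair is approximable, (1, 1) is.
   - A recurrence sequence T_k x -> x for Gamma (resp. lam_k T_k x -> x for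
     Gamma1) gives, along a subsequence where lam_k converges to mu, the
     approximable pair (1, mu) (resp. (conj mu, mu)).
   - Conversely, (1, 1) approximable yields T_k in Gamma with T_k x -> x and
     lam_k -> 1, hence also lam_k T_k x -> x.
   So both x in Rec(Gamma) and x in Rec(Gamma1) are equivalent to
   "x <> 0 and (1, 1) is approximable". *)

Definition strictly_increasing (phi : nat -> nat) : Prop :=
  forall n, (phi n < phi (S n))%nat.

Module BolzanoWeierstrass.
Import ssreflect ssrfun ssrbool eqtype ssrnat order ssralg ssrnum boolp classical_sets
  reals topology normedtype sequences Rstruct Rstruct_topology.
Import Order.TTheory Num.Theory.
Import numFieldNormedType.Exports.
Local Open Scope classical_set_scope.
Local Open Scope ring_scope.

Lemma bounded_real_subseq (u : nat -> R) : (forall n, Rle (Rabs (u n)) 1) ->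
  exists phi, strictly_increasing phi /\
  exists l : R, forall eps : R, Rlt 0 eps ->
    exists N, forall n, (N <= n)%coq_nat -> Rlt (Rabs (u (phi n) - l)) eps.
Proof.
move=> hu; case: (@bolzano_weierstrass R u).
  exists 1; split; first exact: num_real.
  by move=> M M1 x _ /=; apply: le_trans (ltW M1); apply/RleP.
move=> phi phi_incr phi_cvg; exists phi; split.
  move=> n; apply/ssrnat.ltP; rewrite ltnNge; apply/negP => le_phi.
  by have := phi_incr n.+1 n; rewrite ltnn leEnat le_phi.
exists (lim ((u \o phi) @ \oo)) => eps /RltP eps_gt0.
move/cvgrPdist_lt: phi_cvg => /(_ eps eps_gt0) [N _ HN].
exists N => n /ssrnat.leP nN; apply/RltP; have := HN n nN; rewrite distrC; exact.
Qed.
End BolzanoWeierstrass.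

Definition Cconverges (c : nat -> C) (mu : C) : Prop :=
  forall eps, 0 < eps -> exists N, forall n, (N <= n)%nat -> Complex.Cmod (c n - mu) < eps.

Lemma strictly_increasing_ge phi : strictly_increasing phi -> forall n, (n <= phi n)%nat.
Proof. intros Hphi n; induction n as [|n IH]; [lia|specialize (Hphi n); lia]. Qed.

Lemma strictly_increasing_comp phi psi :
  strictly_increasing phi -> strictly_increasing psi ->
  strictly_increasing (fun n => phi (psi n)).
Proof.
  intros Hphi Hpsi n.
  assert (Hmono : forall i j, (i <= j)%nat -> (phi i <= phi j)%nat).
  { intros i j Hij; induction Hij as [|j _ IH]; [lia|specialize (Hphi j); lia]. }
  specialize (Hmono _ _ (Hpsi n)); specialize (Hphi (psi n)); lia.
Qed.

Lemma Cconverges_subseq c mu phi :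
  Cconverges c mu -> strictly_increasing phi -> Cconverges (fun n => c (phi n)) mu.
Proof.
  intros Hc Hphi eps Heps; destruct (Hc eps Heps) as [N HN].
  exists N; intros n Hn; apply HN.
  pose proof (strictly_increasing_ge phi Hphi n); lia.
Qed.

(* Compactness of the closed unit disk: extract convergent subsequences of
   the real and imaginary parts in turn. *)
Lemma unit_disk_subseq (c : nat -> C) :
  (forall n, Complex.Cmod (c n) <= 1) ->
  exists phi, strictly_increasing phi /\ exists mu, Cconverges (fun n => c (phi n)) mu.
Proof.
  intros Hc.
  assert (Hparts : forall n, Rabs (fst (c n)) <= 1 /\ Rabs (snd (c n)) <= 1).
  { intros n; pose proof (Rmax_Cmod (c n)); pose proof (Hc n).
    pose proof (Rmax_l (Rabs (fst (c n))) (Rabs (snd (c n)))).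
    pose proof (Rmax_r (Rabs (fst (c n))) (Rabs (snd (c n)))); lra. }
  destruct (BolzanoWeierstrass.bounded_real_subseq (fun n => fst (c n)))
    as [phi1 [Hphi1 [l1 Hl1]]]; [intros n; apply Hparts|].
  destruct (BolzanoWeierstrass.bounded_real_subseq (fun n => snd (c (phi1 n))))
    as [phi2 [Hphi2 [l2 Hl2]]]; [intros n; apply Hparts|].
  exists (fun n => phi1 (phi2 n)); split; [apply strictly_increasing_comp; assumption|].
  exists (l1, l2); intros eps Heps.
  destruct (Hl1 (eps / 2)) as [N1 HN1]; [lra|].
  destruct (Hl2 (eps / 2)) as [N2 HN2]; [lra|].
  exists (max N1 N2); intros n Hn.
  assert (Hre : Rabs (fst (c (phi1 (phi2 n))) - l1) < eps / 2).
  { apply HN1; pose proof (strictly_increasing_ge phi2 Hphi2 n); lia. }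
  assert (Him : Rabs (snd (c (phi1 (phi2 n))) - l2) < eps / 2) by (apply HN2; lia).
  set (z := (c (phi1 (phi2 n)) - (l1, l2))%C).
  assert (Hmax : Rmax (Rabs (fst z)) (Rabs (snd z)) < eps / 2)
    by (apply Rmax_lub_lt; assumption).
  pose proof (Rle_trans _ _ _ (Rabs_pos (fst z)) (Rmax_l _ (Rabs (snd z)))).
  pose proof (Cmod_2Rmax z).
  pose proof (sqrt_less 2 ltac:(lra) ltac:(lra)).
  pose proof (sqrt_lt_R0 2 ltac:(lra)).
  nra.
Qed.

Lemma Cconverges_unit c mu :
  (forall n, Complex.Cmod (c n) = 1) -> Cconverges c mu -> Complex.Cmod mu = 1.
Proof.
  intros Hc Hcv.
  assert (Hclose : forall eps, 0 < eps -> exists z : C,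
             Complex.Cmod z = 1 /\ Complex.Cmod (z - mu) < eps).
  { intros eps Heps; destruct (Hcv eps Heps) as [N HN].
    exists (c N); split; [apply Hc | apply HN; lia]. }
  apply Rle_antisym; apply Rle_plus_epsilon; intros eps Heps;
    destruct (Hclose eps Heps) as [z [Hz Hzmu]].
  - pose proof (Cmod_triangle z (mu - z)) as Htri.
    replace (z + (mu - z))%C with mu in Htri by ring.
    rewrite <- Copp_minus_distr, Cmod_opp in Htri; lra.
  - pose proof (Cmod_triangle mu (z - mu)) as Htri.
    replace (mu + (z - mu))%C with z in Htri by ring; lra.
Qed.

Lemma unit_circle_subseq2 (c c' : nat -> C) :
  (forall n, Complex.Cmod (c n) = 1) -> (forall n, Complex.Cmod (c' n) = 1) ->
  exists phi, strictly_increasing phi /\ exists a b,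
    Complex.Cmod a = 1 /\ Complex.Cmod b = 1 /\
    Cconverges (fun n => c (phi n)) a /\ Cconverges (fun n => c' (phi n)) b.
Proof.
  intros Hc Hc'.
  destruct (unit_disk_subseq c) as [phi1 [Hphi1 [a Ha]]]; [intros n; rewrite Hc; lra|].
  destruct (unit_disk_subseq (fun n => c' (phi1 n))) as [phi2 [Hphi2 [b Hb]]];
    [intros n; rewrite Hc'; lra|].
  exists (fun n => phi1 (phi2 n)); split; [apply strictly_increasing_comp; assumption|].
  exists a, b; repeat split.
  - apply (Cconverges_unit (fun n => c (phi1 n))); [intros n; apply Hc | exact Ha].
  - apply (Cconverges_unit (fun n => c' (phi1 (phi2 n)))); [intros n; apply Hc' | exact Hb].
  - apply (Cconverges_subseq (fun n => c (phi1 n))); assumption.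
  - exact Hb.
Qed.

Lemma Cmod_sub_sym (a b : C) : Complex.Cmod (a - b) = Complex.Cmod (b - a).
Proof. rewrite <- Copp_minus_distr; apply Cmod_opp. Qed.

Lemma Cmod_sub_triangle (a b c : C) :
  Complex.Cmod (a - c) <= Complex.Cmod (a - b) + Complex.Cmod (b - c).
Proof. replace (a - c)%C with ((a - b) + (b - c))%C by ring; apply Cmod_triangle. Qed.

(* For |u| = 1, the distance between the powers u^i and u^(i+k) only depends
   on k; this turns a near-repetition of powers into a power near 1. *)
Lemma unit_pow_gap (u : C) i k :
  Complex.Cmod u = 1 -> Complex.Cmod (u ^ (i + k) - u ^ i) = Complex.Cmod (u ^ k - 1).
Proof.
  intros Hu; rewrite Cpow_add_r.
  replace (u ^ i * u ^ k - u ^ i)%C with (u ^ i * (u ^ k - 1))%C by ring.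
  rewrite Cmod_mult, Cmod_pow, Hu, pow1; ring.
Qed.

(* Simultaneous Dirichlet approximation: two unimodular numbers have a common
   positive power arbitrarily close to 1 (pigeonhole by compactness of the
   torus: two far apart terms of a convergent subsequence of powers). *)
Lemma simultaneous_dirichlet (a b : C) :
  Complex.Cmod a = 1 -> Complex.Cmod b = 1 -> forall d, 0 < d ->
  exists k, (1 <= k)%nat /\ Complex.Cmod (a ^ k - 1) < d /\ Complex.Cmod (b ^ k - 1) < d.
Proof.
  intros Ha Hb d Hd.
  assert (Hpow : forall u : C, Complex.Cmod u = 1 -> forall n, Complex.Cmod (u ^ n) = 1)
    by (intros u Hu n; rewrite Cmod_pow, Hu; apply pow1).
  destruct (unit_circle_subseq2 (Cpow a) (Cpow b) (Hpow a Ha) (Hpow b Hb))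
    as [phi [Hphi [alpha [beta [_ [_ [Halpha Hbeta]]]]]]].
  destruct (Halpha (d / 2)) as [Na HNa]; [lra|].
  destruct (Hbeta (d / 2)) as [Nb HNb]; [lra|].
  set (N := max Na Nb).
  assert (Hgap : forall (u mu : C), Complex.Cmod u = 1 ->
      Complex.Cmod (u ^ phi N - mu) < d / 2 -> Complex.Cmod (u ^ phi (S N) - mu) < d / 2 ->
      Complex.Cmod (u ^ (phi (S N) - phi N) - 1) < d).
  { intros u mu Hu H1 H2.
    rewrite <- (unit_pow_gap u (phi N)) by exact Hu.
    replace (phi N + (phi (S N) - phi N))%nat with (phi (S N)) by (specialize (Hphi N); lia).
    pose proof (Cmod_sub_triangle (u ^ phi (S N)) mu (u ^ phi N)).
    rewrite (Cmod_sub_sym mu) in *; lra. }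
  exists (phi (S N) - phi N)%nat; split; [specialize (Hphi N); lia|].
  split; [apply (Hgap a alpha) | apply (Hgap b beta)];
    try assumption; [apply HNa | apply HNa | apply HNb | apply HNb]; lia.
Qed.

Lemma Cmod_complex (a : C) : Cmod a = Complex.Cmod a.
Proof. unfold Defs.Cmod, Complex.Cmod; f_equal; ring. Qed.

Section NormedSpace.
Variable X : CBanach.

Definition vdist (u v : X) : R := vnorm (vadd u (vopp v)).

Lemma vsub_add_cancel (u v : X) : vadd (vadd u (vopp v)) v = u.
Proof.
  rewrite <- vadd_assoc, (vadd_comm X (vopp v)), vadd_opp; apply vadd_zero.
Qed.

Lemma vsub_of_add (p q r : X) : vadd p q = r -> p = vadd r (vopp q).
Proof. intros <-; rewrite <- vadd_assoc, vadd_opp; symmetry; apply vadd_zero. Qed.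

Lemma additive_sub (f : X -> X) :
  (forall u v, f (vadd u v) = vadd (f u) (f v)) ->
  forall u v, f (vadd u (vopp v)) = vadd (f u) (vopp (f v)).
Proof. intros Hf u v; apply vsub_of_add; rewrite <- Hf, vsub_add_cancel; reflexivity. Qed.

Lemma vscal_sub_l (a b : C) (x : X) :
  vadd (vscal a x) (vopp (vscal b x)) = vscal (a - b)%C x.
Proof.
  symmetry; apply vsub_of_add; rewrite <- vscal_adds.
  f_equal; change (a - b + b = a)%C; ring.
Qed.

Lemma vscal_zero (x : X) : vscal (RtoC 0) x = vzero.
Proof.
  rewrite <- (vadd_opp X (vscal (RtoC 0) x)), (vscal_sub_l (RtoC 0) (RtoC 0) x).
  f_equal; ring.
Qed.

Lemma vnorm_zero : vnorm (@vzero X) = 0.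
Proof.
  rewrite <- (vscal_zero vzero), vnorm_scal, Cmod_complex, Cmod_0; ring.
Qed.

Lemma vopp_scal (x : X) : vopp x = vscal (- RtoC 1)%C x.
Proof.
  symmetry; rewrite <- (vadd_zero X (vopp x)), vadd_comm.
  apply vsub_of_add.
  rewrite <- (vscal_one X x) at 2; rewrite <- vscal_adds, <- (vscal_zero x).
  f_equal; change (- RtoC 1 + RtoC 1 = RtoC 0)%C; ring.
Qed.

(* Norms are nonnegative: 0 = |x - x| <= |x| + |-x| = 2 |x|. *)
Lemma vnorm_ge0 (x : X) : 0 <= vnorm x.
Proof.
  pose proof (vnorm_triangle X x (vopp x)) as Htri.
  rewrite vadd_opp, vnorm_zero, vopp_scal, vnorm_scal, Cmod_complex, Cmod_m1 in Htri.
  lra.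
Qed.

Lemma vdist_triangle (u v w : X) : vdist u w <= vdist u v + vdist v w.
Proof.
  unfold vdist.
  replace (vadd u (vopp w)) with (vadd (vadd u (vopp v)) (vadd v (vopp w)))
    by (rewrite vadd_assoc, vsub_add_cancel; reflexivity).
  apply vnorm_triangle.
Qed.

Lemma vdist_scal (a : C) (u v : X) :
  vdist (vscal a u) (vscal a v) = Complex.Cmod a * vdist u v.
Proof.
  unfold vdist; rewrite <- (additive_sub (vscal a)) by apply vscal_addv.
  rewrite vnorm_scal, Cmod_complex; reflexivity.
Qed.

Lemma vdist_scal_l (a b : C) (x : X) :
  vdist (vscal a x) (vscal b x) = Complex.Cmod (a - b) * vnorm x.
Proof. unfold vdist; rewrite vscal_sub_l, vnorm_scal, Cmod_complex; reflexivity. Qed.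

Lemma bounded_linear_lipschitz (T : X -> X) : bounded_linear T ->
  exists M, 0 <= M /\ forall u v, vdist (T u) (T v) <= M * vdist u v.
Proof.
  intros [Hadd [_ [M HM]]].
  exists (Rabs M); split; [apply Rabs_pos|].
  intros u v; unfold vdist; rewrite <- (additive_sub T Hadd).
  eapply Rle_trans; [apply HM|].
  apply Rmult_le_compat_r; [apply vnorm_ge0 | apply Rle_abs].
Qed.
End NormedSpace.

Lemma nat_choice {A : Type} (P : nat -> A -> Prop) :
  (forall k, exists a, P k a) -> exists f : nat -> A, forall k, P k (f k).
Proof.
  intros H; exists (fun k => proj1_sig (constructive_indefinite_description _ (H k))).
  intros k; exact (proj2_sig (constructive_indefinite_description _ (H k))).
Qed.

Lemma inv_succ_small (eps : R) : 0 < eps ->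
  exists N, forall n, (N <= n)%nat -> / (INR n + 1) < eps.
Proof.
  intros Heps; destruct (archimed_cor1 eps Heps) as [N [HN HN0]].
  exists N; intros n Hn.
  apply (Rle_lt_trans _ (/ INR N)); [|exact HN].
  apply Rinv_le_contravar; [apply lt_0_INR; lia|].
  apply le_INR in Hn; lra.
Qed.

Lemma Cconj_mul_unit (u : C) : Complex.Cmod u = 1 -> (Cconj u * u = 1)%C.
Proof.
  intros Hu; rewrite Cmult_comm, <- Cmod2_conj, Hu.
  change (RtoC (1 ^ 2) = RtoC 1); f_equal; ring.
Qed.

Section Approximation.
Variable X : CBanach.
Variable Gamma : (X -> X) -> Prop.
Hypothesis Gamma_bounded : forall T, Gamma T -> bounded_linear T.
Hypothesis Gamma_mul : forall T S, Gamma T -> Gamma S -> Gamma (fun y => T (S y)).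
Variable lam : (X -> X) -> C.
Hypothesis lam_unit : forall T, Gamma T -> Complex.Cmod (lam T) = 1.
Hypothesis lam_mul : forall T S, Gamma T -> Gamma S ->
  lam (fun y => T (S y)) = (lam T * lam S)%C.
Variable x : X.

Definition approximable (a m : C) : Prop :=
  forall eps, 0 < eps -> exists T, Gamma T /\
    vdist X (T x) (vscal a x) < eps /\ Complex.Cmod (lam T - m) < eps.

(* Approximable pairs multiply: if T x ~ a x and S x ~ b x, then
   T (S x) ~ T (b x) = b (T x) ~ b a x, and lam_(TS) = lam_T lam_S ~ m n. *)
Lemma approximable_mul (a m b n : C) :
  approximable a m -> approximable b n -> approximable (a * b) (m * n).
Proof.
  intros Ham Hbn eps Heps.
  pose proof (Cmod_ge_0 b) as Hb0; pose proof (Cmod_ge_0 n) as Hn0.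
  set (d1 := eps / (2 * (1 + Complex.Cmod b + Complex.Cmod n))).
  assert (Hd1 : d1 * (2 * (1 + Complex.Cmod b + Complex.Cmod n)) = eps)
    by (unfold d1; field; lra).
  assert (Hd1pos : 0 < d1) by (unfold d1; apply Rdiv_lt_0_compat; lra).
  destruct (Ham d1 Hd1pos) as [T [HT [HTx HTlam]]].
  destruct (bounded_linear_lipschitz X T (Gamma_bounded T HT)) as [M [HM0 HM]].
  set (d2 := eps / (2 * (1 + M))).
  assert (Hd2 : d2 * (2 * (1 + M)) = eps) by (unfold d2; field; lra).
  assert (Hd2pos : 0 < d2) by (unfold d2; apply Rdiv_lt_0_compat; lra).
  destruct (Hbn d2 Hd2pos) as [S [HS [HSx HSlam]]].
  exists (fun y => T (S y)); split; [apply Gamma_mul; assumption|]; split.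
  - destruct (Gamma_bounded T HT) as [_ [HTscal _]].
    assert (Hab : vscal (a * b)%C x = vscal b (vscal a x)).
    { rewrite vscal_mul; f_equal; change (a * b = b * a)%C; ring. }
    pose proof (vdist_triangle X (T (S x)) (T (vscal b x)) (vscal (a * b)%C x)).
    pose proof (HM (S x) (vscal b x)).
    rewrite HTscal, Hab, vdist_scal in *.
    assert (M * vdist X (S x) (vscal b x) <= M * d2)
      by (apply Rmult_le_compat_l; lra).
    assert (Complex.Cmod b * vdist X (T x) (vscal a x) <= Complex.Cmod b * d1)
      by (apply Rmult_le_compat_l; lra).
    nra.
  - rewrite lam_mul by assumption.
    replace (lam T * lam S - m * n)%C with (lam T * (lam S - n) + (lam T - m) * n)%C by ring.
    pose proof (Cmod_triangle (lam T * (lam S - n)) ((lam T - m) * n)).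
    rewrite !Cmod_mult, lam_unit in * by assumption.
    assert (Complex.Cmod (lam T - m) * Complex.Cmod n <= d1 * Complex.Cmod n)
      by (apply Rmult_le_compat_r; lra).
    nra.
Qed.
Lemma approximable_pow (a m : C) :
  approximable a m -> forall k, approximable (a ^ S k) (m ^ S k).
Proof.
  intros Ham k; induction k as [|k IH].
  - rewrite !Cpow_1_r; exact Ham.
  - exact (approximable_mul a m _ _ Ham IH).
Qed.

(* Any unimodular approximable pair makes (1, 1) approximable: use a power
   (a^k, m^k) close to (1, 1). *)
Lemma approximable_one (a m : C) :
  Complex.Cmod a = 1 -> Complex.Cmod m = 1 -> approximable a m -> approximable 1 1.
Proof.
  intros Ha Hm Ham eps Heps.
  pose proof (vnorm_ge0 X x) as Hx0.
  set (d := eps / (2 * (1 + vnorm x))).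
  assert (Hd : 0 < d) by (unfold d; apply Rdiv_lt_0_compat; lra).
  assert (Hdeps : d * (2 * (1 + vnorm x)) = eps) by (unfold d; field; lra).
  destruct (simultaneous_dirichlet a m Ha Hm d Hd) as [[|k] [Hk [Hak Hmk]]]; [lia|].
  destruct (approximable_pow a m Ham k d Hd) as [T [HT [HTx HTlam]]].
  exists T; split; [exact HT|]; split.
  - pose proof (vdist_triangle X (T x) (vscal (a ^ S k)%C x) (vscal (RtoC 1) x)).
    rewrite vdist_scal_l in *.
    assert (Complex.Cmod (a ^ S k - 1) * vnorm x <= d * vnorm x)
      by (apply Rmult_le_compat_r; lra).
    nra.
  - pose proof (Cmod_sub_triangle (lam T) (m ^ S k) 1); nra.
Qed.

(* A sequence T_k in Gamma with T_k x - c_k x -> 0 for unimodular c_k gives an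
   approximable unimodular pair: a joint limit point of (c_k, lam_(T_k)). *)
Lemma approximable_of_sequence (Tk : nat -> X -> X) (c : nat -> C) :
  (forall k, Gamma (Tk k)) -> (forall k, Complex.Cmod (c k) = 1) ->
  (forall eps, 0 < eps -> exists N, forall n, (N <= n)%nat ->
     vdist X (Tk n x) (vscal (c n) x) < eps) ->
  exists a m, Complex.Cmod a = 1 /\ Complex.Cmod m = 1 /\ approximable a m.
Proof.
  intros HG Hc Hcv.
  destruct (unit_circle_subseq2 c (fun k => lam (Tk k)) Hc (fun k => lam_unit _ (HG k)))
    as [phi [Hphi [alpha [mu [Halpha [Hmu [Hcalpha Hlmu]]]]]]].
  exists alpha, mu; split; [exact Halpha|]; split; [exact Hmu|].
  intros eps Heps.
  pose proof (vnorm_ge0 X x) as Hx0.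
  set (d := eps / (2 * (1 + vnorm x))).
  assert (Hd : 0 < d) by (unfold d; apply Rdiv_lt_0_compat; lra).
  assert (Hdeps : d * (2 * (1 + vnorm x)) = eps) by (unfold d; field; lra).
  destruct (Hcalpha d Hd) as [N1 HN1].
  destruct (Hlmu d Hd) as [N2 HN2].
  destruct (Hcv (eps / 2)) as [N3 HN3]; [lra|].
  set (n := max (max N1 N2) N3).
  assert (Hn : (N3 <= phi n)%nat)
    by (pose proof (strictly_increasing_ge phi Hphi n); unfold n in *; lia).
  specialize (HN1 n ltac:(unfold n; lia)); specialize (HN2 n ltac:(unfold n; lia)).
  specialize (HN3 (phi n) Hn).
  exists (Tk (phi n)); split; [apply HG|]; split.
  - pose proof (vdist_triangle X (Tk (phi n) x) (vscal (c (phi n)) x) (vscal alpha x)).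
    rewrite vdist_scal_l in *.
    assert (Complex.Cmod (c (phi n) - alpha) * vnorm x <= d * vnorm x)
      by (apply Rmult_le_compat_r; lra).
    nra.
  - nra.
Qed.

Lemma approximable_sequence (a m : C) : approximable a m ->
  exists Tk : nat -> X -> X, (forall k, Gamma (Tk k)) /\
    forall eps, 0 < eps -> exists N, forall n, (N <= n)%nat ->
      vdist X (Tk n x) (vscal a x) < eps /\ Complex.Cmod (lam (Tk n) - m) < eps.
Proof.
  intros Ham.
  destruct (nat_choice (fun k T => Gamma T /\ vdist X (T x) (vscal a x) < / (INR k + 1)
                                   /\ Complex.Cmod (lam T - m) < / (INR k + 1)))
    as [Tk HTk].
  { intros k; apply Ham, Rinv_0_lt_compat; pose proof (pos_INR k); lra. }
  exists Tk; split; [intros k; apply HTk|].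
  intros eps Heps; destruct (inv_succ_small eps Heps) as [N HN].
  exists N; intros n Hn; specialize (HN n Hn); destruct (HTk n) as [_ [H1 H2]]; lra.
Qed.

Lemma recurrent_approximable :
  Rec Gamma x -> exists a m, Complex.Cmod a = 1 /\ Complex.Cmod m = 1 /\ approximable a m.
Proof.
  intros [_ [Tk [HG Hcv]]].
  apply (approximable_of_sequence Tk (fun _ => RtoC 1) HG); [intros; apply Cmod_1|].
  intros eps Heps; destruct (Hcv eps Heps) as [N HN].
  exists N; intros n Hn; rewrite vscal_one; apply HN, Hn.
Qed.

Definition rotated (U : X -> X) : Prop :=
  exists T, Gamma T /\ U = (fun y => vscal (lam T) (T y)).

(* A recurrent vector of Gamma1 has an approximable unimodular pair (conj mu, mu),
   since T_k x = conj lam_k (lam_k T_k x). *)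
Lemma rotated_recurrent_approximable :
  Rec rotated x -> exists a m, Complex.Cmod a = 1 /\ Complex.Cmod m = 1 /\ approximable a m.
Proof.
  intros [_ [Uk [HU Hcv]]].
  destruct (nat_choice (fun k T => Gamma T /\ Uk k = (fun y => vscal (lam T) (T y))) HU)
    as [Tk HTk].
  apply (approximable_of_sequence Tk (fun k => Cconj (lam (Tk k)))).
  - intros k; apply HTk.
  - intros k; rewrite Cmod_conj; apply lam_unit, HTk.
  - intros eps Heps; destruct (Hcv eps Heps) as [N HN].
    exists N; intros n Hn; destruct (HTk n) as [HG HU_n].
    replace (Tk n x) with (vscal (Cconj (lam (Tk n))) (Uk n x))
      by (rewrite HU_n, vscal_mul, Cconj_mul_unit, vscal_one by (apply lam_unit, HG);
          reflexivity).
    rewrite vdist_scal, Cmod_conj, lam_unit, Rmult_1_l by exact HG.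
    apply HN, Hn.
Qed.

Lemma recurrent_iff_one_approximable :
  Rec Gamma x <-> x <> vzero /\ approximable 1 1.
Proof.
  split.
  - intros Hrec; split; [apply Hrec|].
    destruct (recurrent_approximable Hrec) as [a [m [Ha [Hm Ham]]]].
    exact (approximable_one a m Ha Hm Ham).
  - intros [Hx Hid]; split; [exact Hx|].
    destruct (approximable_sequence 1 1 Hid) as [Tk [HG Hcv]].
    exists Tk; split; [exact HG|].
    intros eps Heps; destruct (Hcv eps Heps) as [N HN].
    exists N; intros n Hn; destruct (HN n Hn) as [Hdist _].
    rewrite vscal_one in Hdist; exact Hdist.
Qed.

(* Recurrence for Gamma1 means the same, as
   |lam_k T_k x - x| <= |T_k x - x| + |lam_k - 1| |x|. *)
Lemma rotated_recurrent_iff_one_approximable :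
  Rec rotated x <-> x <> vzero /\ approximable 1 1.
Proof.
  split.
  - intros Hrec; split; [apply Hrec|].
    destruct (rotated_recurrent_approximable Hrec) as [a [m [Ha [Hm Ham]]]].
    exact (approximable_one a m Ha Hm Ham).
  - intros [Hx Hid]; split; [exact Hx|].
    pose proof (vnorm_ge0 X x) as Hx0.
    destruct (approximable_sequence 1 1 Hid) as [Tk [HG Hcv]].
    exists (fun k y => vscal (lam (Tk k)) (Tk k y)); split.
    { intros k; exists (Tk k); split; [apply HG | reflexivity]. }
    intros eps Heps.
    set (d := eps / (1 + vnorm x)).
    assert (Hd : 0 < d) by (unfold d; apply Rdiv_lt_0_compat; lra).
    assert (Hdeps : d * (1 + vnorm x) = eps) by (unfold d; field; lra).
    destruct (Hcv d Hd) as [N HN].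
    exists N; intros n Hn; destruct (HN n Hn) as [Hdist Hlam].
    change (vdist X (vscal (lam (Tk n)) (Tk n x)) x < eps).
    replace x with (vscal (RtoC 1) x) at 2 by apply vscal_one.
    pose proof (vdist_triangle X (vscal (lam (Tk n)) (Tk n x)) (vscal (lam (Tk n)) x)
                  (vscal (RtoC 1) x)).
    rewrite vdist_scal, vdist_scal_l, lam_unit, Rmult_1_l in * by apply HG.
    rewrite vscal_one in Hdist.
    assert (Complex.Cmod (lam (Tk n) - 1) * vnorm x <= d * vnorm x)
      by (apply Rmult_le_compat_r; lra).
    nra.
Qed.

End Approximation.

Theorem theorem2p7 (X : CBanach) (Gamma : (X -> X) -> Prop)
  (HB : forall T, Gamma T -> bounded_linear T)
  (Hmul : forall T S, Gamma T -> Gamma S -> Gamma (fun x => T (S x)))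
  (lam : (X -> X) -> Cplx)
  (Hlam_T : forall T, Gamma T -> Cmod (lam T) = 1)
  (Hlam_mul : forall T S, Gamma T -> Gamma S ->
      lam (fun x => T (S x)) = Cmul (lam T) (lam S)) :
  let Gamma1 : (X -> X) -> Prop :=
    fun U => exists T, Gamma T /\ U = (fun x => vscal (lam T) (T x)) in
  forall x : X, Rec Gamma x <-> Rec Gamma1 x.
Proof.
  intros Gamma1 x.
  assert (lam_unit : forall T, Gamma T -> Complex.Cmod (lam T) = 1)
    by (intros T HT; rewrite <- Cmod_complex; apply Hlam_T, HT).
  rewrite (recurrent_iff_one_approximable X Gamma HB Hmul lam lam_unit Hlam_mul x).
  symmetry.
  exact (rotated_recurrent_iff_one_approximable X Gamma HB Hmul lam lam_unit Hlam_mul x).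
Qed.
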